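(* Consider Algorithm B on an input whose optimal offline makespan is $1$. Then at most one job is handled by Step 4, and if some job is handled by Step 4, then every job arriving after it is handled by Step 2 or Step 3.
   Context: Model (two hierarchical machines with migration). Jobs $1,2,\dots,n$ arrive one by one. Job $j$ has a size $p_j>0$ and a grade of service (GoS) $g_j\in\{1,2\}$; a job of GoS $1$ may only be processed on machine $m_1$, a job of GoS $2$ on $m_1$ or $m_2$. When job $j$ arrives, the algorithm assigns it and may migrate previously arrived jobs of total size at most $M\cdot p_j$. Bin stretching: the optimal offline makespan of the complete input is $1$ and is known in advance. Notation: $Y_{j}$ is the set of jobs on $m_2$ just after job $j$ has been handled (including migrations), $y_j$ its total size, $y_0=0$. $p^{\max Y}_j$ and $p^{\max Y,2}_j$ are the largest and second largest sizes of jobs in $Y_{j-1}$ (each defined as $0$ if it does not exist), and $j^{\max Y}$ is a job of $Y_{j-1}$ of size $p^{\max Y}_j$. ''Sorted $Y_{j-1}$'' means the jobs of $Y_{j-1}$ listed in non-increasing order of size; $w_j$ denotes the total size of the set $W$ chosen when handling $j$. Algorithm B. On arrival of job $j$: Step 2: if $g_j=1$ or $y_{j-1}\ge 0.75$, assign $j$ to $m_1$. Step 3: else if $y_{j-1}+p_j\le 1.25$, assign $j$ to $m_2$. Step 4: else if $p_j\ge 0.75$: let $W$ be the longest prefix of sorted $Y_{j-1}$ with total size at most $0.75p_j$ (possibly empty). If $y_{j-1}-w_j+p_j>1.25$, assign $j$ to $m_1$ (no migration); otherwise migrate the jobs of $W$ to $m_1$ and assign $j$ to $m_2$. Step 5: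 else (so $p_j<0.75$): if $p_j+p^{\max Y}_j>1.25$, assign $j$ to $m_1$. Otherwise choose $W$ as follows: if $p^{\max Y}_j\ge y_{j-1}/2$, let $W=Y_{j-1}\setminus\{j^{\max Y}\}$; if $0.25\le p^{\max Y}_j<y_{j-1}/2$, let $W=\{j^{\max Y}\}$; if $p^{\max Y}_j<0.25$, let $W$ be the shortest prefix of sorted $Y_{j-1}$ with total size at least $0.25$ (or all of $Y_{j-1}$ if none exists), and if then $w_j>0.75p_j$ replace $W$ by $Y_{j-1}\setminus W$. Migrate the jobs of $W$ to $m_1$ and assign $j$ to $m_2$. *)

From HB Require Import structures.
From mathcomp Require Import all_boot all_order all_algebra.
Set Implicit Arguments. Unset Strict Implicit. Unset Printing Implicit Defensive.
Import Order.TTheory GRing.Theory Num.Theory.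
Local Open Scope ring_scope.

(* Jobs are numbered 0,1,...,n-1 (job j of the paper is job j-1 here).
   A job j has size [p j] and grade of service [g j] (1 or 2). *)

Section AlgB.
Variable R : realFieldType.
Variable p : nat -> R.

Definition tsize (Y : seq nat) : R := \sum_(i <- Y) p i.

Definition pmaxY (Y : seq nat) : R := \big[Num.max/0]_(i <- Y) p i.

Definition sorted_noninc (sY Y : seq nat) : Prop :=
  perm_eq sY Y /\ sorted (fun a b => p b <= p a) sY.

Definition longest_prefix_le (sY : seq nat) (b : R) (k : nat) : Prop :=
  (k <= size sY)%N /\ tsize (take k sY) <= b /\
  (forall k', (k < k' <= size sY)%N -> b < tsize (take k' sY)).

Definition shortest_prefix_ge (sY : seq nat) (b : R) (k : nat) : Prop :=
  ((k <= size sY)%N /\ b <= tsize (take k sY) /\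
     (forall k', (k' < k)%N -> tsize (take k' sY) < b))
  \/ ((forall k', (k' <= size sY)%N -> tsize (take k' sY) < b) /\ k = size sY).

Inductive stepB := Step2 | Step3 | Step4 | Step5.

(* [handlesB g Y j s Y']: with Y = Y_{j-1} the list of jobs on m_2,
   Algorithm B handles job j by Step s, and Y' = Y_j afterwards.
   This is a relation: it allows every possible tie-breaking
   (choice of sorted order, choice of j^{max Y}). *)
Definition handlesB (g : nat -> nat) (Y : seq nat) (j : nat) (s : stepB)
    (Y' : seq nat) : Prop :=
  let y := tsize Y in
  let c2 := (g j == 1%N) || (3 / 4 <= y) in
  match s with
  | Step2 => c2 /\ Y' = Y
  | Step3 => ~~ c2 /\ y + p j <= 5 / 4 /\ Y' = j :: Y
  | Step4 => ~~ c2 /\ 5 / 4 < y + p j /\ 3 / 4 <= p j /\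
      exists sY k, sorted_noninc sY Y /\ longest_prefix_le sY (3 / 4 * p j) k /\
        (if 5 / 4 < y - tsize (take k sY) + p j
         then Y' = Y                      (* j to m_1, no migration *)
         else Y' = j :: drop k sY)        (* W migrated to m_1, j to m_2 *)
  | Step5 => ~~ c2 /\ 5 / 4 < y + p j /\ p j < 3 / 4 /\
      let pm := pmaxY Y in
      (5 / 4 < p j + pm /\ Y' = Y)
      \/ (p j + pm <= 5 / 4 /\
          ((exists jm, jm \in Y /\ p jm = pm /\ y / 2 <= pm /\
                Y' = [:: j; jm])                       (* W = Y \ {jmax} *)
           \/ (exists jm, jm \in Y /\ p jm = pm /\ 1 / 4 <= pm /\ pm < y / 2 /\
                Y' = j :: rem jm Y)                    (* W = {jmax} *)
           \/ (pm < 1 / 4 /\ exists sY k, sorted_noninc sY Y /\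
                 shortest_prefix_ge sY (1 / 4) k /\
                 (if 3 / 4 * p j < tsize (take k sY)
                  then Y' = j :: take k sY             (* W replaced by Y \ W *)
                  else Y' = j :: drop k sY))))
  end.

Definition runB (n : nat) (g : nat -> nat) (Ys : nat -> seq nat)
    (st : nat -> stepB) : Prop :=
  Ys 0%N = [::] /\
  forall j, (j < n)%N -> handlesB g (Ys j) j (st j) (Ys j.+1).

(* offline schedules: a j = true means job j on m_1 *)
Definition feasible (n : nat) (g : nat -> nat) (a : nat -> bool) : Prop :=
  forall j, (j < n)%N -> g j = 1%N -> a j = true.

Definition makespan (n : nat) (a : nat -> bool) : R :=
  Num.max (\sum_(j < n | a j) p j) (\sum_(j < n | ~~ a j) p j).

Definition opt_is_one (n : nat) (g : nat -> nat) : Prop :=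
  (exists a, feasible n g a /\ makespan n a = 1) /\
  (forall a, feasible n g a -> 1 <= makespan n a).

End AlgB.

From Pilot Require Import Defs.
From mathcomp Require Import all_boot all_order all_algebra.
From mathcomp Require Import lra.
Set Implicit Arguments. Unset Strict Implicit. Unset Printing Implicit Defensive.
Import Order.TTheory GRing.Theory Num.Theory.
Local Open Scope ring_scope.

(* A job i handled by Step 4 has p_i >= 3/4.  If B keeps i on m_2, then
   y >= 3/4 from then on, so every later job goes to m_1 by Step 2.
   Otherwise i stays off m_2, and a later job m reaching Step 4 or 5 would
   give y + p_m > 5/4, so the distinct jobs of Y, m and i would have total
   size > 5/4 + 3/4 = 2, exceeding the total size of an input of optimal
   makespan 1.  Step 3 keeps i off m_2, so by induction only Steps 2 and 3
   occur after job i. *)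

(* [Defs.tsize] is qualified because MathComp's [tsize] (tuple size) shadows it. *)
Section TotalSize.
Variable R : realFieldType.
Variable p : nat -> R.

Lemma tsize_cons j Y : Defs.tsize p (j :: Y) = p j + Defs.tsize p Y.
Proof. by rewrite /Defs.tsize big_cons. Qed.

Lemma tsize_ge0 Y : {in Y, forall j, 0 <= p j} -> 0 <= Defs.tsize p Y.
Proof. by move=> Y_ge0; rewrite /Defs.tsize big_seq; apply: sumr_ge0. Qed.

Lemma tsize_le_sum n Y :
  (forall j, (j < n)%N -> 0 <= p j) -> uniq Y -> all (fun j => j < n)%N Y ->
  Defs.tsize p Y <= \sum_(j < n) p j.
Proof.
move=> p_ge0 uY /allP Y_lt.
rewrite -(big_mkord xpredT) (bigID (mem Y)) /=.
have -> : \sum_(0 <= j < n | j \in Y) p j = Defs.tsize p Y.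
  rewrite /Defs.tsize -big_filter; apply/perm_big/uniq_perm => //.
    by rewrite filter_uniq // iota_uniq.
  move=> j; rewrite mem_filter mem_index_iota.
  by case jY: (j \in Y); rewrite //= Y_lt.
rewrite lerDl big_seq_cond; apply: sumr_ge0 => j /andP[].
by rewrite mem_index_iota => /andP[_ /p_ge0].
Qed.

Lemma sum_le_2makespan n (a : nat -> bool) :
  \sum_(j < n) p j <= 2 * makespan p n a.
Proof.
rewrite (bigID (fun j : 'I_n => a j)) /= /makespan.
set s1 := \sum_(j < n | a j) p j; set s2 := \sum_(j < n | ~~ a j) p j.
have : s1 <= Num.max s1 s2 by rewrite le_max lexx.
have : s2 <= Num.max s1 s2 by rewrite le_max lexx orbT.
lra.
Qed.

Lemma opt_one_sum_le2 n g : opt_is_one p n g -> \sum_(j < n) p j <= 2.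
Proof.
move=> [[a [_ ma]] _].
by apply: le_trans (sum_le_2makespan n a) _; rewrite ma mulr1.
Qed.

End TotalSize.

Section OneStep.
Variable R : realFieldType.
Variable p : nat -> R.
Variable g : nat -> nat.

Lemma handlesB_wf Y m s Y' :
  uniq Y -> all (fun j => j < m)%N Y -> handlesB p g Y m s Y' ->
  uniq Y' /\ all (fun j => j < m.+1)%N Y'.
Proof.
move=> uY Y_lt.
have Y_lt' : all (fun j => j < m.+1)%N Y.
  by apply/allP => j /(allP Y_lt) /ltnW.
have cons_wf Z : uniq Z -> {subset Z <= Y} ->
    uniq (m :: Z) /\ all (fun j => j < m.+1)%N (m :: Z).
  move=> uZ ZY; split; last by rewrite /= ltnSn; apply/allP => j /ZY /(allP Y_lt').
  rewrite /= uZ andbT; apply/negP => /ZY /(allP Y_lt); by rewrite ltnn.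
have sorted_wf sY : perm_eq sY Y -> uniq sY /\ {subset sY <= Y}.
  by move=> pe; rewrite (perm_uniq pe); split=> // j; rewrite (perm_mem pe).
case: s => /=.
- by case=> _ ->.
- by case=> _ [_ ->]; apply: cons_wf.
- case=> _ [_ [_ [sY [k [[/sorted_wf[usY sYY] _] [_]]]]]].
  case: ifP => _ -> //; apply: cons_wf; first by rewrite drop_uniq.
  by move=> j /mem_drop /sYY.
- case=> _ [_ [_ [[_ ->] //|[_ [[jm [jY [_ [_ ->]]]]|[[jm [_ [_ [_ [_ ->]]]]]|
      [_ [sY [k [[/sorted_wf[usY sYY] _] [_]]]]]]]]]]].
  + by apply: cons_wf => // j; rewrite inE => /eqP ->.
  + by apply: cons_wf; [apply: rem_uniq | move=> j /mem_rem].
  + case: ifP => _ ->; apply: cons_wf.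
    * by rewrite take_uniq.
    * by move=> j /mem_take /sYY.
    * by rewrite drop_uniq.
    * by move=> j /mem_drop /sYY.
Qed.

Lemma handlesB_Step4 Y i Y' :
  {in Y, forall j, 0 <= p j} -> all (fun j => j < i)%N Y ->
  handlesB p g Y i Step4 Y' ->
  3 / 4 <= p i /\ (i \notin Y' \/ 3 / 4 <= Defs.tsize p Y').
Proof.
move=> Y_ge0 Y_lt [_ [_ [big_i [sY [k [[pe _] [_ Y'_def]]]]]]]; split=> //.
case: ifP Y'_def => _ ->.
  by left; apply/negP => /(allP Y_lt); rewrite ltnn.
right; rewrite tsize_cons.
suff : 0 <= Defs.tsize p (drop k sY) by lra.
by apply: tsize_ge0 => j /mem_drop; rewrite (perm_mem pe) => /Y_ge0.
Qed.

Lemma handlesB_after_Step4 n Y m s Y' i :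
  (forall j, (j < n)%N -> 0 <= p j) -> \sum_(j < n) p j <= 2 ->
  (i < m < n)%N -> 3 / 4 <= p i ->
  uniq Y -> all (fun j => j < m)%N Y ->
  i \notin Y \/ 3 / 4 <= Defs.tsize p Y ->
  handlesB p g Y m s Y' ->
  (s = Step2 \/ s = Step3) /\ (i \notin Y' \/ 3 / 4 <= Defs.tsize p Y').
Proof.
move=> p_ge0 sum_le2 /andP[im mn] big_i uY Y_lt [iY|big_Y]; last first.
  (* Steps 3, 4 and 5 all require y < 3/4. *)
  by case: s => /= [[_ ->]|[/negP]|[/negP]|[/negP]]; rewrite ?big_Y ?orbT; auto.
have im' : (i < n)%N := ltn_trans im mn.
have no_overflow : ~ 5 / 4 < Defs.tsize p Y + p m.
  have : Defs.tsize p (m :: i :: Y) <= \sum_(j < n) p j.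
    apply: tsize_le_sum p_ge0 _ _.
    - rewrite /= inE negb_or iY uY eq_sym (ltn_eqF im) !andbT /=.
      by apply/negP => /(allP Y_lt); rewrite ltnn.
    - by rewrite /= mn im' /=; apply/allP => j /(allP Y_lt) /ltn_trans->.
  rewrite !tsize_cons; lra.
case: s => /=.
- by case=> _ ->; auto.
- by case=> _ [_ ->]; split; [right | left; rewrite inE negb_or iY (ltn_eqF im)].
- by case=> _ [/no_overflow].
- by case=> _ [/no_overflow].
Qed.

End OneStep.

Section Run.
Variable R : realFieldType.
Variables (n : nat) (p : nat -> R) (g : nat -> nat).
Variables (Ys : nat -> seq nat) (st : nat -> stepB).
Hypothesis p_gt0 : forall j, (j < n)%N -> 0 < p j.
Hypothesis opt_one : opt_is_one p n g.
Hypothesis run : runB p n g Ys st.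

Let p_ge0 j : (j < n)%N -> 0 <= p j.
Proof. by move/p_gt0/ltW. Qed.

Lemma runB_wf m : (m <= n)%N -> uniq (Ys m) /\ all (fun j => j < m)%N (Ys m).
Proof.
case: run => Ys0 handles; elim: m => [|m IHm] mn; first by rewrite Ys0.
by have [uY Y_lt] := IHm (ltnW mn); apply: handlesB_wf (handles m mn).
Qed.

Lemma runB_after_Step4 i k :
  (i < k < n)%N -> st i = Step4 -> st k = Step2 \/ st k = Step3.
Proof.
move=> /andP[ik kn] st_i; have i_lt_n := ltn_trans ik kn.
have handles j : (j < n)%N -> handlesB p g (Ys j) j (st j) (Ys j.+1).
  exact: (proj2 run).
have [_ Yi_lt] := runB_wf (ltnW i_lt_n).
have [big_i inv_i] : 3 / 4 <= p i /\ (i \notin Ys i.+1 \/ 3 / 4 <= Defs.tsize p (Ys i.+1)).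
  apply: handlesB_Step4 (Yi_lt) _; last by rewrite -st_i; apply: handles.
  by move=> j /(allP Yi_lt) /ltn_trans /(_ i_lt_n) /p_ge0.
have after m : (i < m < n)%N -> i \notin Ys m \/ 3 / 4 <= Defs.tsize p (Ys m) ->
    (st m = Step2 \/ st m = Step3) /\
    (i \notin Ys m.+1 \/ 3 / 4 <= Defs.tsize p (Ys m.+1)).
  move=> /andP[im mn] inv_m; have [uY Y_lt] := runB_wf (ltnW mn).
  apply: handlesB_after_Step4 p_ge0 (opt_one_sum_le2 opt_one) _ big_i uY Y_lt
    inv_m (handles m mn).
  by rewrite im.
have inv m : (i < m <= n)%N -> i \notin Ys m \/ 3 / 4 <= Defs.tsize p (Ys m).
  elim: m => [//|m IHm] /andP[im mn].
  have [<-|ne] := eqVneq i m; first exact: inv_i.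
  have im' : (i < m)%N by rewrite ltn_neqAle ne -ltnS.
  apply: (proj2 (after m _ _)); first by rewrite im'.
  by apply: IHm; rewrite im' ltnW.
apply: (proj1 (after k _ _)); first by rewrite ik.
by apply: inv; rewrite ik ltnW.
Qed.

End Run.

Theorem mainTheorem7 (R : realFieldType) (n : nat) (p : nat -> R)
    (g : nat -> nat) (Ys : nat -> seq nat) (st : nat -> stepB) :
  (forall j, (j < n)%N -> 0 < p j) ->
  (forall j, (j < n)%N -> g j = 1%N \/ g j = 2%N) ->
  opt_is_one p n g ->
  runB p n g Ys st ->
  (forall i k, (i < n)%N -> (k < n)%N -> st i = Step4 -> st k = Step4 -> i = k) /\
  (forall i k, (i < k < n)%N -> st i = Step4 -> st k = Step2 \/ st k = Step3).
Proof.
move=> p_gt0 _ opt_one run.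
have after := runB_after_Step4 p_gt0 opt_one run.
split=> // i k iN kN st_i st_k.
case: (ltngtP i k) => // [ik|ki].
- by have [] := after i k _ st_i; rewrite ?ik ?kN ?st_k.
- by have [] := after k i _ st_k; rewrite ?ki ?iN ?st_i.
Qed.
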